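(* Let $G$ be a connected cubic graph of order at least $6$. Then $\alpha(G)\geq \frac{3}{5}\,\mathrm{diss}(G)$.
   Context: All graphs are finite, simple and undirected. $\alpha(G)$ denotes the independence number of $G$. A set $D$ of vertices of $G$ is a dissociation set if the subgraph $G[D]$ induced by $D$ has maximum degree at most $1$; the dissociation number $\mathrm{diss}(G)$ is the maximum order of a dissociation set in $G$. *)

From mathcomp Require Import all_boot.
Set Implicit Arguments. Unset Strict Implicit. Unset Printing Implicit Defensive.

Definition simple_graph (T : finType) (e : rel T) : Prop :=
  symmetric e /\ irreflexive e.

Definition nbhd (T : finType) (e : rel T) (x : T) : {set T} := [set y | e x y].

Definition cubic (T : finType) (e : rel T) : Prop :=
  forall x : T, #|nbhd e x| = 3.

Definition connected_graph (T : finType) (e : rel T) : Prop :=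
  forall x y : T, connect e x y.

Definition independent (T : finType) (e : rel T) (S : {set T}) : bool :=
  [forall x in S, forall y in S, ~~ e x y].

Definition dissociation (T : finType) (e : rel T) (D : {set T}) : bool :=
  [forall x in D, #|D :&: nbhd e x| <= 1].

Definition alpha (T : finType) (e : rel T) : nat :=
  \max_(S : {set T} | independent e S) #|S|.

Definition diss (T : finType) (e : rel T) : nat :=
  \max_(D : {set T} | dissociation e D) #|D|.

(* Let D be a maximum dissociation set and R its complement.  Every vertex
   of D has at least two neighbours in R, so at least 2|D| of the 3|R| edge
   ends at R come from D and the others come from edges inside R.  The local
   minima of an ordering of R form an independent set S, and every other
   vertex of R is the larger end of an edge inside R; hence
   2|D| + 2(|R| - |S|) <= 3|R|, that is 3|D| <= |V| + 2|S| <= |V| + 2 alpha.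
   Finally |V| <= 3 alpha, as a connected cubic graph other than K4 is
   3-colourable (Brooks).  For the latter, two non-adjacent vertices p, q
   are coloured alike and the rest greedily, which works unless some set of
   vertices is an obstruction for p and q; such a pair is found by repeatedly
   replacing the pair by one with smaller obstructions, after disposing of
   cut vertices and of diamonds (K4 minus an edge) directly. *)

From mathcomp Require Import all_boot perm zify.
From Stdlib Require Import Classical.

Set Implicit Arguments. Unset Strict Implicit. Unset Printing Implicit Defensive.

Lemma exists_notin (T : finType) (A : {set T}) : #|A| < #|T| -> exists x, x \notin A.
Proof.
move=> ltA; have : ~: A != set0 by rewrite -card_gt0 cardsCs setCK subn_gt0.
by case/set0Pn => x; rewrite inE; exists x.
Qed.

Lemma card_set_in_pred (T : finType) (B : {set T}) (P : pred T) :
  #|[set y in B | P y]| = \sum_(y in B) P y.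
Proof.
rewrite -sum1_card big_mkcond [RHS]big_mkcond; apply: eq_bigr => y _.
by rewrite !inE; case: (y \in B); case: (P y).
Qed.

Lemma tperm_neq (T : finType) (k i j : T) : i != k -> tperm k j i != j.
Proof. by move=> ik; rewrite -{2}(tpermL k j) (inj_eq perm_inj). Qed.

Definition proper_on (T : finType) (e : rel T) k (W : {set T}) (c : T -> 'I_k) :=
  forall x y, x \in W -> y \in W -> e x y -> c x != c y.

Section CubicGraph.
Variables (T : finType) (e : rel T).

Lemma leq_card_alpha (S : {set T}) : independent e S -> #|S| <= alpha e.
Proof. exact: (@leq_bigmax_cond _ (independent e) (fun S => #|S|)). Qed.

Lemma diss_attained : exists2 D, dissociation e D & diss e = #|D|.
Proof.
have D0 : dissociation e set0 by apply/forallP => x; rewrite inE.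
by exists [arg max_(D > set0 | dissociation e D) #|D|];
  [case: arg_maxnP | exact: bigmax_eq_arg].
Qed.

Lemma colouring_card_le k (col : T -> 'I_k) :
  (forall x y, e x y -> col x != col y) -> #|T| <= k * alpha e.
Proof.
move=> col_ok; pose C i := [set x | col x == i].
have indC i : independent e (C i).
  apply/forall_inP => x /[!inE] /eqP xi; apply/forall_inP => y /[!inE] /eqP yi.
  by apply/negP => /col_ok; rewrite xi yi eqxx.
have -> : #|T| = \sum_(i < k) #|C i|.
  rewrite -sum1_card (partition_big col xpredT) //=.
  by apply: eq_bigr => i _; rewrite -sum1_card; apply: eq_bigl => x; rewrite inE.
rewrite -[k in k * _]card_ord -sum_nat_const.
by apply: leq_sum => i _; exact: leq_card_alpha.
Qed.

Hypotheses (esym : symmetric e) (eirr : irreflexive e).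

Lemma edge_neq x y : e x y -> x != y.
Proof. by apply: contraTneq => ->; rewrite eirr. Qed.

(* Induction on the uncoloured set Z: the vertex z it provides sees fewer
   than k colours among its neighbours in P and outside Z, so it can be
   coloured last. *)
Lemma extend_colouring k (P U : {set T}) (c0 : T -> 'I_k) :
  [disjoint P & U] -> proper_on e P c0 ->
  (forall Z : {set T}, Z \subset U -> Z != set0 ->
     exists2 z, z \in Z & #|c0 @: (nbhd e z :&: P)| + #|nbhd e z :&: Z| < k) ->
  exists2 c : T -> 'I_k, {in P, c =1 c0} & proper_on e (P :|: U) c.
Proof.
move=> dPU c0P degen.
suff ext (Z : {set T}) : Z \subset U ->
    exists2 c : T -> 'I_k, {in P, c =1 c0} & proper_on e (P :|: Z) c.
  exact: ext.
elim: {Z}#|Z| {-2}Z (erefl #|Z|) => [|n IH] Z cardZ sZU.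
  move/eqP: cardZ; rewrite cards_eq0 => /eqP->; exists c0 => //.
  by move=> x y; rewrite setU0; apply: c0P.
have [z zZ degz] : exists2 z, z \in Z &
    #|c0 @: (nbhd e z :&: P)| + #|nbhd e z :&: Z| < k.
  by apply: degen => //; rewrite -card_gt0 cardZ.
have zP : z \notin P by rewrite (disjointFl dPU) // (subsetP sZU).
have [c cP cZ] : exists2 c : T -> 'I_k, {in P, c =1 c0} & proper_on e (P :|: Z :\ z) c.
  apply: IH; last by apply: subset_trans (subD1set Z z) sZU.
  by move: cardZ; rewrite (cardsD1 z) zZ => -[].
pose Nz := nbhd e z :&: (P :|: Z :\ z).
have seen : #|c @: Nz| < k.
  have sub : c @: Nz \subset (c0 @: (nbhd e z :&: P)) :|: (c @: (nbhd e z :&: Z :\ z)).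
    apply/subsetP => _ /imsetP[t /[!inE] /andP[ezt /orP[tP|tZ]] ->].
      by rewrite (cP t tP) imset_f // !inE ezt tP.
    by rewrite imset_f ?orbT // !inE ezt.
  apply: leq_ltn_trans (subset_leq_card sub) _; rewrite cardsU.
  apply: leq_ltn_trans (leq_subr _ _) _; apply: leq_ltn_trans degz.
  rewrite leq_add2l; apply: leq_trans (leq_imset_card _ _) _.
  exact/subset_leq_card/subsetDl.
have [i iNz] : exists i, i \notin c @: Nz by apply: exists_notin; rewrite card_ord.
exists (fun t => if t == z then i else c t).
  by move=> x xP /=; case: eqP => [xz|_]; [rewrite -xz xP in zP | exact: cP].
have seen_nbr t : e z t -> t \in P :|: Z -> t != z -> c t != i.
  move=> ezt tPZ tz; apply: contraNneq iNz => <-.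
  by rewrite imset_f // !inE ezt tz; rewrite !inE in tPZ.
move=> x y xPZ yPZ exy /=.
case: (eqVneq x z) => [xz|xz]; case: (eqVneq y z) => [yz|yz].
- by move: exy; rewrite xz yz eirr.
- by rewrite eq_sym seen_nbr // -xz.
- by rewrite seen_nbr // -yz esym.
- by apply: cZ => //; rewrite !inE ?xz ?yz; rewrite !inE in xPZ yPZ.
Qed.

Lemma card_nbhdI x (B : {set T}) : #|nbhd e x :&: B| = \sum_(y in B) e x y.
Proof. by rewrite setIC -card_set_in_pred; apply: eq_card => y; rewrite !inE. Qed.

Lemma sum_card_nbhdI (A B : {set T}) :
  \sum_(x in A) #|nbhd e x :&: B| = \sum_(y in B) #|nbhd e y :&: A|.
Proof.
rewrite (eq_bigr _ (fun x _ => card_nbhdI x B)) exchange_big /=.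
by apply: eq_bigr => y _; rewrite card_nbhdI; apply: eq_bigr => x _; rewrite esym.
Qed.

Lemma exists_independent_degree_sum (R : {set T}) : exists2 S : {set T},
  independent e S & 2 * #|R| <= 2 * #|S| + \sum_(r in R) #|nbhd e r :&: R|.
Proof.
pose rk (x : T) := val (enum_rank x).
have rk_inj : injective rk by move=> x y /val_inj/enum_rank_inj.
have rk_neq x y : e x y -> rk x != rk y by move/edge_neq; rewrite (inj_eq rk_inj).
pose below r := [set s in R | e r s && (rk s < rk r)].
pose above r := [set s in R | e r s && (rk r < rk s)].
pose S := [set r in R | below r == set0].
exists S.
  apply/forall_inP => x /[!inE] /andP[xR /eqP bx0].
  apply/forall_inP => y /[!inE] /andP[yR /eqP by0].
  apply/negP => exy; have := rk_neq x y exy; rewrite neq_ltn => /orP[] lt.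
    by have := in_set0 x; rewrite -by0 !inE esym exy xR lt.
  by have := in_set0 y; rewrite -bx0 !inE exy yR lt.
have split_nbhd r : #|nbhd e r :&: R| = #|below r| + #|above r|.
  rewrite card_nbhdI !card_set_in_pred -big_split; apply: eq_bigr => s _ /=.
  by case: (boolP (e r s)) => //= ers; move: (rk_neq r s ers); case: ltngtP.
have below_above : \sum_(r in R) #|below r| = \sum_(r in R) #|above r|.
  rewrite (eq_bigr _ (fun r _ => card_set_in_pred R _)) exchange_big /=.
  apply: eq_bigr => s _; rewrite card_set_in_pred.
  by apply: eq_bigr => r _; rewrite esym.
have nonmin : #|R :\: S| <= \sum_(r in R) #|below r|.
  rewrite [X in _ <= X](bigID (mem S)) /=; apply: leq_trans (leq_addl _ _).
  rewrite -sum1_card [X in X <= _](eq_bigl (fun r => (r \in R) && (r \notin S))).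
    by apply: leq_sum => r /andP[rR]; rewrite !inE rR card_gt0.
  by move=> r; rewrite !inE andbC.
have SR : S \subset R by apply/subsetP => r /[!inE] /andP[].
rewrite (eq_bigr _ (fun r _ => split_nbhd r)) big_split /= -below_above.
by rewrite -(cardsID S R) (setIidPr SR); lia.
Qed.

Hypothesis cub : cubic e.

Lemma diss_le_order_alpha (D : {set T}) :
  dissociation e D -> 3 * #|D| <= #|T| + 2 * alpha e.
Proof.
move=> dissD; pose R := ~: D.
have nbhd_split x : #|nbhd e x :&: D| + #|nbhd e x :&: R| = 3.
  by rewrite -(cub x) -(cardsID D (nbhd e x)) setDE.
have out_D : 2 * #|D| <= \sum_(x in D) #|nbhd e x :&: R|.
  rewrite mulnC -sum_nat_const; apply: leq_sum => x xD.
  have := nbhd_split x; move/forall_inP: dissD => /(_ x xD).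
  by rewrite setIC; lia.
have deg_R : \sum_(r in R) #|nbhd e r :&: D| + \sum_(r in R) #|nbhd e r :&: R| = 3 * #|R|.
  by rewrite -big_split /= (eq_bigr _ (fun r _ => nbhd_split r)) sum_nat_const mulnC.
have [S indS Sbound] := exists_independent_degree_sum R.
have := leq_card_alpha indS; have := cardsC D; rewrite -/R.
rewrite -(sum_card_nbhdI D R) in deg_R; lia.
Qed.

Lemma nbhd_third x p q : e x p -> e x q -> p != q -> exists r,
  [/\ e x r, r != p, r != q & forall w, e x w -> [\/ w = p, w = q | w = r]].
Proof.
move=> exp exq pq.
have sub : [set p; q] \subset nbhd e x by apply/subsetP => w /set2P[]->; rewrite inE.
have : #|nbhd e x :\: [set p; q]| == 1 by rewrite cardsD (setIidPr sub) cards2 pq cub.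
case/cards1P => r Nr; have := set11 r; rewrite -Nr !inE negb_or => /andP[/andP[rp rq] exr].
exists r; split => // w exw; case: (boolP (w \in [set p; q])) => [/set2P[]->|wpq].
- exact: Or31.
- exact: Or32.
have : w \in nbhd e x :\: [set p; q] by rewrite !inE exw andbT; rewrite !inE in wpq.
by rewrite Nr => /set1P->; apply: Or33.
Qed.

Lemma nbhd_other2 x p : e x p -> exists q r,
  [/\ e x q, e x r, q != p, r != p & q != r] /\
  forall w, e x w -> [\/ w = p, w = q | w = r].
Proof.
move=> exp; have : 0 < #|nbhd e x :\ p|.
  by move: (cub x); rewrite (cardsD1 p) inE exp add1n => -[->].
case/card_gt0P => q /[!inE] /andP[qp exq].
have pq : p != q by rewrite eq_sym.
have [r [exr rp rq nbr]] := nbhd_third exp exq pq.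
by exists q, r; split; first by split; rewrite // eq_sym.
Qed.

Lemma nbhd_of3 x p q r : e x p -> e x q -> e x r -> p != q -> p != r -> q != r ->
  forall w, e x w -> [\/ w = p, w = q | w = r].
Proof.
move=> exp exq exr pq pr qr.
have [r' [exr' r'p r'q nbr]] := nbhd_third exp exq pq.
suff -> : r = r' by [].
by case: (nbr r exr) => // rE; [move: pr | move: qr]; rewrite rE eqxx.
Qed.

Lemma card_nbhdI_disjoint z (A S : {set T}) : A \subset nbhd e z -> [disjoint A & S] ->
  #|nbhd e z :&: S| + #|A| <= 3.
Proof.
move=> sAN dAS; rewrite -(cub z) -cardsUI.
have -> : nbhd e z :&: S :&: A = set0.
  apply/setP => w; rewrite !inE; case: (boolP (w \in A)) => wA; rewrite ?andbF //.
  by rewrite (disjointFr dAS wA) andbF.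
by rewrite cards0 addn0 subset_leq_card // subUset subsetIl.
Qed.

Hypothesis conn : connected_graph e.

Lemma boundary_edge (Z : {set T}) z0 t : z0 \in Z -> t \notin Z ->
  exists z u, [/\ z \in Z, u \notin Z & e z u].
Proof.
move=> z0Z tZ.
case: (boolP [exists z in Z, exists u in ~: Z, e z u]).
  by case/exists_inP => z zZ /exists_inP[u /[!inE] uZ ezu]; exists z, u.
move/exists_inPn => noedge; have closedZ : closed e (mem Z).
  move=> x y exy; apply/idP/idP => /= [xZ|yZ]; apply: contraT => nZ.
    by case/exists_inP: (noedge x xZ); exists y; rewrite ?inE.
  by case/exists_inP: (noedge y yZ); exists x; rewrite ?inE // esym.
by move: (closed_connect closedZ (conn z0 t)); rewrite /= z0Z (negbTE tZ).
Qed.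

(* Each nonempty Z inside W has a vertex with a neighbour outside Z, since
   connectivity leads from Z to t. *)
Lemma colourable_avoiding t (W : {set T}) : t \notin W ->
  exists c : T -> 'I_3, proper_on e W c.
Proof.
move=> tW.
have [|||c _ cW] := @extend_colouring 3 set0 W (fun => ord0).
- by rewrite disjoints_subset sub0set.
- by move=> x y; rewrite inE.
- move=> Z sZW /set0Pn[z0 z0Z].
  have tZ : t \notin Z by apply: contra tW; apply: (subsetP sZW).
  have [z [u [zZ uZ ezu]]] := boundary_edge z0Z tZ.
  exists z => //; rewrite setI0 imset0 cards0 add0n.
  have := @card_nbhdI_disjoint z [set u] Z; rewrite cards1 sub1set inE ezu.
  by rewrite disjoints1 uZ addn1 => /(_ isT isT).
by exists c => x y xW yW; apply: cW; rewrite inE ?xW ?yW orbT.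
Qed.

Definition three_colourable := exists c : T -> 'I_3, forall x y, e x y -> c x != c y.

(* The diamond K = {a, b, c, d} is coloured a, b -> 0, c -> 1, d -> 2; only
   a and b have neighbours a', b' outside K, and the colouring of the rest is
   permuted so that a' and b' avoid 0. *)
Lemma diamond_colourable a b c d : a != b -> ~~ e a b ->
  e a c -> e a d -> e b c -> e b d -> e c d -> three_colourable.
Proof.
move=> ab nab ac ad bc bd cd; have ne := edge_neq.
have [a' [aa' a'c a'd Na]] := nbhd_third ac ad (ne _ _ cd).
have [b' [bb' b'c b'd Nb]] := nbhd_third bc bd (ne _ _ cd).
have [ca cb da] : [/\ e c a, e c b & e d a] by split; rewrite esym.
have [db dc] : e d b /\ e d c by split; rewrite esym.
have Nc := nbhd_of3 ca cb cd ab (ne _ _ ad) (ne _ _ bd).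
have Nd := nbhd_of3 da db dc ab (ne _ _ ac) (ne _ _ bc).
pose K := [set a; b; c; d].
have [c1 c1_ok] : exists c1 : T -> 'I_3, proper_on e (~: K) c1.
  by apply: (@colourable_avoiding a); rewrite !inE eqxx.
have [a'K b'K] : a' \notin K /\ b' \notin K.
  split; rewrite !inE -!orbA; apply/or4P => -[] /eqP E;
    move: nab aa' bb' a'c a'd b'c b'd; rewrite E ?eirr ?eqxx ?andbF //;
    by rewrite esym => /negbTE->.
have [k] : exists k, k \notin [set c1 a'; c1 b'].
  by apply: exists_notin; rewrite cards2 card_ord; case: (_ != _).
rewrite !inE negb_or => /andP[ka' kb'].
pose col t := if t \in K then (if (t == a) || (t == b) then ord0
  else if t == c then @Ordinal 3 1 isT else @Ordinal 3 2 isT)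
  else tperm k ord0 (c1 t).
have [cola colb] : col a = ord0 /\ col b = ord0 by rewrite /col !inE !eqxx ?orbT.
have colc : col c = @Ordinal 3 1 isT.
  by rewrite /col !inE eqxx !orbT /= (negbTE (ne _ _ ca)) (negbTE (ne _ _ cb)).
have cold : col d = @Ordinal 3 2 isT.
  rewrite /col !inE eqxx !orbT /=.
  by rewrite !(negbTE (ne _ _ da), negbTE (ne _ _ db), negbTE (ne _ _ dc)).
have colK t : t \notin K -> col t = tperm k ord0 (c1 t) by rewrite /col => /negbTE->.
have col_okK x y : x \in K -> e x y -> col x != col y.
  rewrite !inE -!orbA => /or4P[] /eqP-> exy.
  - case: (Na _ exy) => ->; rewrite ?cola ?colc ?cold // colK //.
    by rewrite eq_sym tperm_neq // eq_sym.
  - case: (Nb _ exy) => ->; rewrite ?colb ?colc ?cold // colK //.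
    by rewrite eq_sym tperm_neq // eq_sym.
  - by case: (Nc _ exy) => ->; rewrite ?cola ?colb ?colc ?cold.
  - by case: (Nd _ exy) => ->; rewrite ?cola ?colb ?colc ?cold.
exists col => x y exy.
case: (boolP (x \in K)) => xK; first exact: col_okK.
case: (boolP (y \in K)) => yK; first by rewrite eq_sym col_okK // esym.
by rewrite !colK // (inj_eq perm_inj); apply: c1_ok; rewrite ?in_setC.
Qed.

(* K and its complement are coloured separately; the colouring of the
   complement is permuted so that the cut vertex w takes a colour missing
   from its (at most two) neighbours in K. *)
Lemma cut_vertex_colourable w (K : {set T}) t : K != set0 -> w \notin K ->
  (forall z u, z \in K -> e z u -> u \in K \/ u = w) -> t \notin K -> t != w ->
  three_colourable.
Proof.
move=> /set0Pn[k0 k0K] wK closedK tK tw.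
have [cK cK_ok] := colourable_avoiding wK.
have [cB cB_ok] : exists cB : T -> 'I_3, proper_on e (~: K) cB.
  by apply: (@colourable_avoiding k0); rewrite inE k0K.
have few : #|nbhd e w :&: K| < 3.
  rewrite ltn_neqAle -{2}(cub w) subset_leq_card ?subsetIl // andbT.
  apply/negP => /eqP NwK.
  have NwsubK : nbhd e w \subset K.
    by apply/setIidPl/eqP; rewrite eqEcard subsetIl NwK cub.
  have wwK : w \in w |: K by rewrite !inE eqxx.
  have twK : t \notin w |: K by rewrite !inE negb_or tw tK.
  have [z [u [/setU1P[->|zK] /[!inE] /norP[uw uK] ezu]]] := boundary_edge wwK twK.
    by rewrite (subsetP NwsubK) ?inE in uK.
  by case: (closedK z u zK ezu) => [uK'|/eqP]; [rewrite uK' in uK | rewrite (negbTE uw)].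
have [j jN] : exists j, j \notin cK @: (nbhd e w :&: K).
  by apply: exists_notin; rewrite card_ord (leq_ltn_trans (leq_imset_card _ _)).
pose col x := if x \in K then cK x else tperm (cB w) j (cB x).
have jN_K x : x \in K -> e x w -> cK x != j.
  by move=> xK exw; apply: contraNneq jN => <-; rewrite imset_f // !inE esym exw.
exists col => x y exy; rewrite /col.
case: (boolP (x \in K)) => xK; case: (boolP (y \in K)) => yK.
- exact: cK_ok.
- case: (closedK x y xK exy) => [yK'|yw]; first by rewrite yK' in yK.
  by rewrite yw tpermL jN_K -?yw.
- case: (closedK y x yK _) => [|xK'|xw]; first by rewrite esym.
    by rewrite xK' in xK.
  by rewrite xw tpermL eq_sym jN_K -?xw // esym.
- by rewrite (inj_eq perm_inj); apply: cB_ok; rewrite ?in_setC.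
Qed.

Definition no_cut_vertex := forall w (K : {set T}), K != set0 -> w \notin K ->
  (forall z u, z \in K -> e z u -> u \in K \/ u = w) -> forall t, t \in K \/ t = w.

Definition no_diamond := forall a b c d, a != b -> ~~ e a b ->
  e a c -> e a d -> e b c -> e b d -> e c d -> False.

(* An obstruction for p and q is a set of vertices which, once p and q are
   coloured alike, cannot be coloured greedily: it is only left through p and
   q, and none of its vertices sees p and q at the same time. *)
Definition obstruction p q (Z : {set T}) :=
  [/\ Z != set0, p \notin Z, q \notin Z,
      forall z u, z \in Z -> e z u -> [\/ u \in Z, u = p | u = q] &
      forall z, z \in Z -> e z p -> e z q -> False].

Lemma obstruction_walk p q Z u v : obstruction p q Z ->
  u \in Z -> e u v -> v != p -> v != q -> v \in Z.
Proof.
by case=> _ _ _ closedZ _ uZ euv vp vq; case: (closedZ u v uZ euv) => // /eqP;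
  rewrite ?(negbTE vp) ?(negbTE vq).
Qed.

Lemma obstruction_common_nbr p q Z c : obstruction p q Z -> e c p -> e c q -> c \notin Z.
Proof. by case=> _ _ _ _ nocommon ecp ecq; apply/negP => /nocommon; apply. Qed.

(* Without cut vertex, an obstruction Z' for a pair p, q taken from an
   obstruction Z for x, y (q may be y) lies in Z + y, since whatever escapes
   Z + y could only be reached through y; it also misses p and q. *)
Lemma obstruction_shrink (ncv : no_cut_vertex) x y Z p q c :
  x != y -> obstruction x y Z -> p \in Z -> q \in y |: Z -> p != q ->
  e c p -> e c q -> (forall Z', obstruction p q Z' -> x \in Z' -> c \in Z') ->
  forall Z', obstruction p q Z' -> #|Z'| < #|Z|.
Proof.
move=> xy obsZ pZ qyZ pq ecp ecq reach Z' obsZ'.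
have xZ' : x \notin Z'.
  by apply: contra (reach Z' obsZ') _; apply: obstruction_common_nbr obsZ' ecp ecq.
have [Zn0 xZ yZ closedZ _] := obsZ; have [_ pZ' qZ' closedZ' _] := obsZ'.
have Z'sub : Z' \subset y |: Z.
  apply/subsetP => t tZ'; apply: contraT => tyZ.
  pose K := Z' :\: (y |: Z).
  have Kclosed z u : z \in K -> e z u -> u \in K \/ u = y.
    rewrite !inE negb_or => /andP[/andP[zy zZ] zZ'] ezu.
    have uZ : u \notin Z.
      apply/negP => uZ; case: (closedZ u z uZ _) => [|zZ2|zx|zy2]; first by rewrite esym.
      - by rewrite zZ2 in zZ.
      - by rewrite -zx zZ' in xZ'.
      - by rewrite zy2 eqxx in zy.
    case: (eqVneq u y) => [|uy]; first by right.
    left; rewrite (negbTE uZ) /=.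
    case: (closedZ' z u zZ' ezu) => [//|up|uq]; first by rewrite up pZ in uZ.
    by move: qyZ; rewrite -uq !inE (negbTE uy) (negbTE uZ).
  have Kn0 : K != set0 by apply/set0Pn; exists t; rewrite inE tyZ.
  have yK : y \notin K by rewrite !inE eqxx.
  case: (ncv y K Kn0 yK Kclosed x) => [|/eqP]; last by rewrite (negbTE xy).
  by rewrite inE (negbTE xZ') andbF.
have sub : Z' \subset (y |: Z) :\: [set p; q].
  apply/subsetP => t tZ'; rewrite in_setD (subsetP Z'sub) // andbT !inE.
  by apply/norP; split; [apply: contraNneq pZ' | apply: contraNneq qZ'] => <-.
have pqsub : [set p; q] \subset y |: Z by rewrite subUset !sub1set qyZ !inE pZ orbT.
apply: leq_ltn_trans (subset_leq_card sub) _.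
rewrite cardsD (setIidPr pqsub) cardsU1 yZ cards2 pq add1n subSS subn1.
by rewrite prednK ?leqnn // card_gt0.
Qed.

Lemma card_set4 (a b c d : T) : #|[set a; b; c; d]| <= 4.
Proof.
apply: leq_trans (card_size [:: a; b; c; d]).
by apply/subset_leq_card/subsetP => w; rewrite !inE -!orbA.
Qed.

Hypothesis order_ge5 : 5 <= #|T|.

Lemma no_K4 a b c d : e a b -> e a c -> e a d -> e b c -> e b d -> e c d -> False.
Proof.
move=> ab ac ad bc bd cd.
have [ba ca da] : [/\ e b a, e c a & e d a] by split; rewrite esym.
have [cb db dc] : [/\ e c b, e d b & e d c] by split; rewrite esym.
pose K := [set a; b; c; d].
have [t tK] : exists t, t \notin K.
  by apply: exists_notin; apply: leq_ltn_trans (card_set4 a b c d) _.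
have aK : a \in K by rewrite !inE eqxx.
have [z [u [zK uK ezu]]] := boundary_edge aK tK.
move: uK; rewrite !inE -!orbA; apply/negP/negPn; have ne := edge_neq.
move: zK; rewrite !inE -!orbA => /or4P[] /eqP zE; rewrite zE in ezu.
- by case: (nbhd_of3 ab ac ad (ne _ _ bc) (ne _ _ bd) (ne _ _ cd) ezu) => ->;
    rewrite eqxx ?orbT.
- by case: (nbhd_of3 ba bc bd (ne _ _ ac) (ne _ _ ad) (ne _ _ cd) ezu) => ->;
    rewrite eqxx ?orbT.
- by case: (nbhd_of3 ca cb cd (ne _ _ ab) (ne _ _ ad) (ne _ _ bd) ezu) => ->;
    rewrite eqxx ?orbT.
- by case: (nbhd_of3 da db dc (ne _ _ ab) (ne _ _ ac) (ne _ _ bc) ezu) => ->;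
    rewrite eqxx ?orbT.
Qed.

Lemma obstruction_nbr (ncv : no_cut_vertex) x y Z : x != y -> obstruction x y Z ->
  exists2 a, a \in Z & e x a.
Proof.
move=> xy [Zn0 xZ yZ closedZ _].
case: (boolP [exists a in Z, e x a]) => [/exists_inP[a]|/exists_inPn noa].
  by exists a.
have closedZy z u : z \in Z -> e z u -> u \in Z \/ u = y.
  move=> zZ ezu; case: (closedZ z u zZ ezu) => [|ux|]; [by left| |by right].
  by move: (noa z zZ); rewrite -ux esym ezu.
case: (ncv y Z Zn0 yZ closedZy x) => [xZ'|/eqP]; first by rewrite xZ' in xZ.
by rewrite (negbTE xy).
Qed.

Lemma obstruction_shrink_path (ncv : no_cut_vertex) x y Z a u v w :
  x != y -> obstruction x y Z -> e x a -> e a u -> e a v -> u \in Z -> v \in Z ->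
  e u v -> e v w -> w != a -> w != u -> w != x ->
  forall Z', obstruction u w Z' -> #|Z'| < #|Z|.
Proof.
move=> xy obsZ exa eau eav uZ vZ euv evw wa wu wx; have ne := edge_neq.
have [vu uw] : e v u /\ u != w by split; rewrite 1?esym 1?eq_sym.
apply: (obstruction_shrink ncv xy obsZ uZ _ uw vu evw).
  case: obsZ => _ _ _ closedZ _.
  by case: (closedZ v w vZ evw) => [wZ|/eqP|->]; rewrite !inE ?wZ ?orbT ?eqxx ?(negbTE wx).
move=> Z' obsZ' xZ'; apply: (obstruction_walk obsZ' _ eav (ne _ _ vu) (ne _ _ evw)).
by apply: (obstruction_walk obsZ' xZ' exa (ne _ _ eau)); rewrite eq_sym.
Qed.

(* Walk from x into Z along a neighbour a of x: the two other neighbours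
   u1, u2 of a lie in Z.  Either they form the new pair, or u1 ~ u2 and, as
   there is no K4 and no diamond, a third neighbour w1 of u1 or w2 of u2 does. *)
Lemma obstruction_step (ncv : no_cut_vertex) (nd : no_diamond) x y Z :
  x != y -> obstruction x y Z ->
  exists p q, [/\ p != q, ~~ e p q & forall Z', obstruction p q Z' -> #|Z'| < #|Z|].
Proof.
move=> xy obsZ; have ne := edge_neq.
have [a aZ exa] := obstruction_nbr ncv xy obsZ; have eax : e a x by rewrite esym.
have [u1 [u2 [[eau1 eau2 u1x u2x u12] Na]]] := nbhd_other2 eax.
have inZ u : e a u -> u != x -> u \in Z.
  move=> eau ux; apply: (obstruction_walk obsZ aZ eau ux).
  by apply: contraTneq aZ => uy; apply: (obstruction_common_nbr obsZ eax); rewrite -uy.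
have [u1Z u2Z] := (inZ _ eau1 u1x, inZ _ eau2 u2x).
case: (boolP (e u1 u2)) => eu1u2; last first.
  exists u1, u2; split => //; apply: (obstruction_shrink ncv xy obsZ u1Z _ u12 eau1 eau2).
    by rewrite inE u2Z orbT.
  by move=> Z' obsZ' xZ'; apply: obstruction_walk obsZ' xZ' exa (ne _ _ eau1) (ne _ _ eau2).
have far u v w u' : e v w -> w != a -> w != u' ->
    (forall t, e u t -> [\/ t = a, t = v | t = u']) -> ~~ e u w.
  move=> evw wa wu' Nu; apply/negP => /Nu[] wE;
    by move: wa evw wu'; rewrite wE ?eqxx ?eirr.
have [u1a u2a u2u1] : [/\ e u1 a, e u2 a & e u2 u1] by split; rewrite esym.
have [w1 [eu1w1 w1a w1u2 N1]] := nbhd_third u1a eu1u2 (ne _ _ eau2).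
have [w2 [eu2w2 w2a w2u1 N2]] := nbhd_third u2a u2u1 (ne _ _ eau1).
case: (eqVneq w1 w2) => [w12|w12].
  exfalso; case: (eqVneq w1 x) => [w1x|w1x].
    by apply: (no_K4 exa _ _ eau1 eau2 eu1u2); rewrite esym -w1x // w12.
  have naw1 : ~~ e a w1.
    by apply/negP => /Na[] w1E; move: w1x eu1w1 w1u2; rewrite w1E ?eqxx ?eirr.
  have [ew1u1 ew1u2] : e w1 u1 /\ e w1 u2 by split; rewrite esym // w12.
  by apply: (nd a w1 u1 u2); rewrite // eq_sym.
case: (eqVneq w1 x) => [w1x|w1x].
  have w2x : w2 != x by rewrite -w1x eq_sym.
  exists u1, w2; split; first by rewrite eq_sym.
    by apply: (far _ u2 _ w1) => //; rewrite eq_sym.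
  exact: (obstruction_shrink_path ncv xy obsZ exa eau1 eau2).
exists u2, w1; split; first by rewrite eq_sym.
  exact: (far _ u1 _ w2).
exact: (obstruction_shrink_path ncv xy obsZ exa eau2 eau1).
Qed.

Lemma unobstructed_pair (ncv : no_cut_vertex) (nd : no_diamond) :
  exists p q, [/\ p != q, ~~ e p q & forall Z, ~ obstruction p q Z].
Proof.
have from_obstruction n x y (Z : {set T}) : #|Z| <= n -> x != y -> obstruction x y Z ->
    exists p q, [/\ p != q, ~~ e p q & forall Z, ~ obstruction p q Z].
  elim: n x y Z => [|n IH] x y Z leZ xy obsZ.
    by case: obsZ leZ => Zn0 _ _ _ _; rewrite leqn0 cards_eq0 (negbTE Zn0).
  have [p [q [pq nepq shrink]]] := obstruction_step ncv nd xy obsZ.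
  case: (classic (exists Z', obstruction p q Z')) => [[Z' obsZ']|none].
    by apply: (IH p q Z') => //; rewrite -ltnS (leq_trans (shrink Z' obsZ')).
  by exists p, q; split => // Z' obsZ'; apply: none; exists Z'.
have /card_gt0P[x _] : 0 < #|T| by apply: leq_trans order_ge5.
have [y] : exists y, y \notin x |: nbhd e x.
  apply: exists_notin; rewrite cardsU1 cub.
  by apply: leq_trans order_ge5; case: (_ \notin _).
rewrite !inE negb_or => /andP[yx nexy]; rewrite eq_sym in yx.
case: (classic (exists Z, obstruction x y Z)) => [[Z obsZ]|none].
  exact: from_obstruction (leqnn _) yx obsZ.
by exists x, y; split => // Z obsZ; apply: none; exists Z.
Qed.

(* Colour p and q alike and the rest greedily: a set Z of uncoloured vertices
   contains a vertex with an edge leaving Z + {p, q}, or one adjacent to both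
   p and q, as Z is no obstruction. *)
Lemma colourable_of_unobstructed p q : p != q -> ~~ e p q ->
  (forall Z, ~ obstruction p q Z) -> three_colourable.
Proof.
move=> pq nepq unobstructed; pose P := [set p; q].
have img1 (S : {set T}) : #|(fun=> ord0 : 'I_3) @: S| <= 1.
  have sub1 : (fun=> ord0 : 'I_3) @: S \subset [set ord0].
    by apply/subsetP => _ /imsetP[? _ ->]; rewrite inE.
  by apply: leq_trans (subset_leq_card sub1) _; rewrite cards1.
have [|||c _ c_ok] := @extend_colouring 3 P (~: P) (fun=> ord0).
- by rewrite disjoints_subset setCK.
- move=> u v /set2P[]-> /set2P[]->; rewrite ?eirr // => euv.
    by rewrite euv in nepq.
  by rewrite esym euv in nepq.
- move=> Z sZP Zn0.
  have ZnP w : w \in Z -> w \notin P by move=> wZ; rewrite -in_setC (subsetP sZP).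
  case: (boolP [exists z in Z, exists u in ~: (Z :|: P), e z u]).
    case/exists_inP => z zZ /exists_inP[u /[!inE] /norP[uZ uP] ezu]; exists z => //.
    have := @card_nbhdI_disjoint z (u |: (nbhd e z :&: P)) Z.
    rewrite subUset sub1set inE ezu subsetIl cardsU1 !inE (negbTE uP) andbF /=.
    have -> : [disjoint u |: (nbhd e z :&: P) & Z].
      rewrite disjoints_subset; apply/subsetP => w /setU1P[->|/setIP[_ wP]]; rewrite inE //.
      by apply: contraL wP; apply: ZnP.
    move/(_ isT isT) => le3.
    by apply: leq_ltn_trans (leq_add (leq_imset_card _ _) (leqnn _)) _; lia.
  move/exists_inPn => noescape.
  case: (boolP [exists z in Z, e z p && e z q]).
    case/exists_inP => z zZ /andP[ezp ezq]; exists z => //.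
    have := @card_nbhdI_disjoint z P Z; rewrite cards2 pq.
    rewrite subUset !sub1set !inE ezp ezq disjoints_subset.
    have -> : P \subset ~: Z.
      by apply/subsetP => w wP; rewrite inE; apply: contraL wP; apply: ZnP.
    move/(_ isT isT) => le3.
    by apply: leq_ltn_trans (leq_add (img1 _) (leqnn _)) _; lia.
  move/exists_inPn => nocommon; exfalso; apply: (unobstructed Z); split => //.
  - by apply/negP => /ZnP; rewrite !inE eqxx orTb.
  - by apply/negP => /ZnP; rewrite !inE eqxx orbT.
  - move=> z u zZ ezu; case: (boolP (u \in Z)) => uZ; first exact: Or31.
    have : u \in P.
      apply: contraNT (noescape z zZ) => uP; apply/exists_inP; exists u => //.
      by rewrite !inE (negbTE uZ); rewrite !inE in uP.
    by case/set2P=> ->; [apply: Or32 | apply: Or33].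
  - by move=> z zZ ezp ezq; move: (nocommon z zZ); rewrite ezp ezq.
by exists c => x y exy; apply: c_ok; rewrite // setUCr inE.
Qed.

Theorem cubic_three_colourable : three_colourable.
Proof.
case: (classic (exists a b c d, [/\ a != b, ~~ e a b, e a c & e a d] /\
    [/\ e b c, e b d & e c d])) => [[a [b [c [d [[ab nab ac ad] [bc bd cd]]]]]]|nodiam].
  exact: (diamond_colourable ab nab ac ad bc bd cd).
case: (classic (exists w (K : {set T}) t, [/\ K != set0, w \notin K,
    forall z u, z \in K -> e z u -> u \in K \/ u = w, t \notin K & t != w]))
  => [[w [K [t [Kn0 wK closedK tK tw]]]]|nocut].
  exact: (cut_vertex_colourable Kn0 wK closedK tK tw).
have ncv : no_cut_vertex.
  move=> w K Kn0 wK closedK t; apply: NNPP => tKw.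
  by apply: nocut; exists w, K, t; split => //; [apply/negP => tK | apply/eqP => tw];
    apply: tKw; [left | right].
have nd : no_diamond.
  by move=> a b c d ab nab ac ad bc bd cd; apply: nodiam; exists a, b, c, d.
have [p [q [pq nepq unobstructed]]] := unobstructed_pair ncv nd.
exact: (colourable_of_unobstructed pq nepq unobstructed).
Qed.

End CubicGraph.

Theorem theorem1 (T : finType) (e : rel T) :
  simple_graph e -> cubic e -> connected_graph e -> 6 <= #|T| ->
  3 * diss e <= 5 * alpha e.
Proof.
move=> [esym eirr] cub conn order_ge6.
have [D dissD ->] := diss_attained e.
have [c c_ok] := cubic_three_colourable esym eirr cub conn (ltnW order_ge6).
have := colouring_card_le c_ok; have := diss_le_order_alpha esym eirr cub dissD.
lia.
Qed.
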